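(* Let $S,T$ be ordered trees, let $f\colon T\to S$ be a rigid surjection with injection $i$, and let $v\in S$. Then the domain of $f^v$ is $T^{i(v)}$, the image of $T^{i(v)}$ under $f^v$ is $S^v$, and $f^v\colon T^{i(v)}\to S^v$ is a sealed rigid surjection.
   Context: A tree is a finite, non-empty partially ordered set $(T,\sqsubseteq_T)$ with a smallest element (the root) such that the set of predecessors of each element is linearly ordered; each node counts as its own predecessor and successor. $v\wedge_T w$ is the $\sqsubseteq_T$-largest common predecessor of $v,w$. A tree is ordered if the immediate successors of each node carry a fixed linear order; this induces the lexicographic linear order $\leq_T$: $v\leq_T w$ if $v\sqsubseteq_T w$, and for incomparable $v,w$, $v\leq_T w$ iff the immediate successor of $v\wedge_T w$ below $v$ precedes the one below $w$. A morphism $e\colon S\to T$ satisfies $e(v\wedge_S w)=e(v)\wedge_T e(w)$, is monotone from $\leq_S$ to $\leq_T$, and maps root to root. A function $f\colon T\to S$ is a rigid surjection if there is a morphism $e\colon S\to T$ with $f\circ e={\rm id}_S$ and $e(f(w))\sqsubseteq_T w$ for all $w$; this $e$ is unique and called the injection of $f$. For $v\in S$, $S^v=\{w\in S\mid w\leq_S v\}$ (an ordered tree with inherited orders). For a rigid surjection $f\colon T\to S$ with injection $i$ and $v\in S$, $f^v=f\upharpoonright T^{i(v)}$. A rigid surjection $f\colon T\to S$ is sealed if its injection maps the $\leq_S$-largest leaf of $S$ to the $\leq_T$-largest leaf of $T$ (a leaf is a $\sqsubseteq$-maximal node). *)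

From mathcomp Require Import all_boot.
Set Implicit Arguments. Unset Strict Implicit. Unset Printing Implicit Defensive.

(* An (ordered-tree) structure: a finite carrier type, the set of nodes,
   the tree order [tle] (v ⊑ w), and the order [sord] used to compare
   immediate successors of a common node ([sord a b] = a precedes-or-equals b). *)
Record otree := OTree {
  ot_car : finType;
  ot_nodes : Finite.sort ot_car -> Prop;
  ot_le : Finite.sort ot_car -> Finite.sort ot_car -> Prop;
  ot_so : Finite.sort ot_car -> Finite.sort ot_car -> Prop }.

Definition car (T : otree) : Type := Finite.sort (ot_car T).
Coercion car : otree >-> Sortclass.

Section Trees.
Variable T : otree.
Local Notation N := (@ot_nodes T).
Local Notation le := (@ot_le T).
Local Notation so := (@ot_so T).

Definition is_root (r : T) := N r /\ forall w, N w -> le r w.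

(* (T, ⊑) is a tree: finite (carrier is a finType), non-empty partial order
   with a smallest element, predecessors of each node linearly ordered. *)
Definition is_tree :=
  [/\ exists r, is_root r,
      (forall v, N v -> le v v),
      (forall v w, N v -> N w -> le v w -> le w v -> v = w),
      (forall u v w, N u -> N v -> N w -> le u v -> le v w -> le u w) &
      (forall u u' w, N u -> N u' -> N w -> le u w -> le u' w ->
         le u u' \/ le u' u)].

Definition isucc (x y : T) :=
  [/\ N x, N y, le x y, x <> y &
      forall z, N z -> le x z -> le z y -> z = x \/ z = y].

Definition is_otree :=
  is_tree /\
  forall x, N x ->
   [/\ (forall a, isucc x a -> so a a),
       (forall a b, isucc x a -> isucc x b -> so a b -> so b a -> a = b),
       (forall a b c, isucc x a -> isucc x b -> isucc x c ->
          so a b -> so b c -> so a c) &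
       (forall a b, isucc x a -> isucc x b -> so a b \/ so b a)].

Definition is_meet (v w m : T) :=
  [/\ N m, le m v, le m w &
      forall u, N u -> le u v -> le u w -> le u m].

Definition lex (v w : T) :=
  le v w \/
  (~ le v w /\ ~ le w v /\
   exists m a b, [/\ is_meet v w m, isucc m a, isucc m b, le a v & le b w]
                 /\ a <> b /\ so a b).

Definition is_leaf (l : T) := N l /\ forall w, N w -> le l w -> w = l.

Definition is_largest_leaf (l : T) :=
  is_leaf l /\ forall l', is_leaf l' -> lex l' l.

Definition subtree (v : T) : otree :=
  @OTree (ot_car T) (fun w => N w /\ lex w v) le so.

End Trees.

Definition is_morphism (S T : otree) (e : S -> T) :=
  [/\ (forall v, @ot_nodes S v -> @ot_nodes T (e v)),
      (forall v w m, @ot_nodes S v -> @ot_nodes S w ->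
         is_meet v w m -> is_meet (e v) (e w) (e m)),
      (forall v w, @ot_nodes S v -> @ot_nodes S w -> lex v w -> lex (e v) (e w)) &
      (forall r, is_root r -> is_root (e r))].

Definition is_injection_of (T S : otree) (f : T -> S) (e : S -> T) :=
  [/\ is_morphism e,
      (forall v, @ot_nodes S v -> f (e v) = v) &
      (forall w, @ot_nodes T w -> @ot_le T (e (f w)) w)].

Definition rigid_surjection (T S : otree) (f : T -> S) :=
  (forall w, @ot_nodes T w -> @ot_nodes S (f w)) /\
  exists e : S -> T, is_injection_of f e.

Definition sealed (T S : otree) (f : T -> S) :=
  rigid_surjection f /\
  forall e : S -> T, is_injection_of f e ->
    forall l, is_largest_leaf l -> is_largest_leaf (e l).

(* The lexicographic order of an ordered tree is a linear order extending the
   tree order, and a subtree T^x is downward closed for the tree order, so its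
   meets, immediate successors and lexicographic order are those of T: T^x is
   an ordered tree whose largest leaf is x.  For a rigid surjection f with
   injection i, i is lex-monotone and i (f w) ⊑ w, so f is lex-monotone as
   well; hence f maps T^(i v) onto S^v and i restricts to an injection of f^v.
   Every injection e of f^v sends v to i v, because i v = i (f (e v)) ⊑ e v
   and e v lies in T^(i v), which makes f^v sealed. *)
From mathcomp Require Import all_boot.
From Stdlib Require Import Classical.
Set Implicit Arguments. Unset Strict Implicit. Unset Printing Implicit Defensive.

Lemma exists_greatest_seq (A : eqType) (R : A -> A -> Prop) (P : A -> Prop) :
  (forall x, P x -> R x x) ->
  (forall x y z, P x -> P y -> P z -> R x y -> R y z -> R x z) ->
  (forall x y, P x -> P y -> R x y \/ R y x) ->
  forall s : seq A, (exists2 x, P x & x \in s) ->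
  exists2 m, P m & forall y, P y -> y \in s -> R y m.
Proof.
move=> Rrefl Rtrans Rtotal; elim=> [|a s IH] [x Px]; first by [].
have [[y Py ys]|noPs] := classic (exists2 y, P y & y \in s).
- have [m Pm Rm] := IH (ex_intro2 _ _ y Py ys).
  have [Pa|nPa] := classic (P a).
  + have [am|ma] := Rtotal a m Pa Pm.
    * by exists m => // z Pz; rewrite in_cons => /predU1P [->|/Rm]; auto.
    * exists a => // z Pz; rewrite in_cons => /predU1P [->|zs]; first exact: Rrefl.
      by apply: (Rtrans z m a) => //; apply: Rm.
  + by exists m => // z Pz; rewrite in_cons => /predU1P [za|/Rm]; [subst|auto].
- rewrite in_cons => /predU1P [xa|xs]; last by case: noPs; exists x.
  subst x; exists a => // z Pz; rewrite in_cons => /predU1P [->|zs]; first exact: Rrefl.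
  by case: noPs; exists z.
Qed.

Lemma exists_greatest (A : finType) (R : A -> A -> Prop) (P : A -> Prop) (x0 : A) :
  P x0 ->
  (forall x, P x -> R x x) ->
  (forall x y z, P x -> P y -> P z -> R x y -> R y z -> R x z) ->
  (forall x y, P x -> P y -> R x y \/ R y x) ->
  exists2 m, P m & forall y, P y -> R y m.
Proof.
move=> Px0 Rrefl Rtrans Rtotal.
have [|m Pm Rm] := exists_greatest_seq Rrefl Rtrans Rtotal (s := index_enum A).
  by exists x0; rewrite ?mem_index_enum.
by exists m => // y Py; apply: Rm; rewrite ?mem_index_enum.
Qed.

Section OrderedTree.
Variable T : otree.
Hypothesis oT : is_otree T.
Local Notation N := (@ot_nodes T).
Local Notation le := (@ot_le T).
Local Notation so := (@ot_so T).

Lemma tree_root : exists r, @is_root T r.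
Proof. by case: oT => -[]; eauto. Qed.

Lemma tle_refl v : N v -> le v v.
Proof. by case: oT => -[]; eauto. Qed.

Lemma tle_anti v w : N v -> N w -> le v w -> le w v -> v = w.
Proof. by case: oT => -[]; eauto. Qed.

Lemma tle_trans u v w : N u -> N v -> N w -> le u v -> le v w -> le u w.
Proof. by case: oT => -[]; eauto. Qed.

Lemma tle_total u u' w : N u -> N u' -> N w -> le u w -> le u' w -> le u u' \/ le u' u.
Proof. by case: oT => -[]; eauto. Qed.

Lemma so_anti m a b : isucc m a -> isucc m b -> so a b -> so b a -> a = b.
Proof. by move=> A; case: (A) => Nm _ _ _ _; case: oT => _ /(_ m Nm) []; eauto. Qed.

Lemma so_total m a b : isucc m a -> isucc m b -> so a b \/ so b a.
Proof. by move=> A; case: (A) => Nm _ _ _ _; case: oT => _ /(_ m Nm) []; eauto. Qed.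

Lemma meet_exists v w : N v -> N w -> exists m, is_meet v w m.
Proof.
move=> Nv Nw; have [r [Nr rmin]] := tree_root.
case: (@exists_greatest _ le (fun u => N u /\ le u v /\ le u w) r)
  => [||||m [Nm [mv mw]] mmax].
- by split=> //; split; apply: rmin.
- by move=> x [Nx _]; apply: tle_refl.
- by move=> x y z [? _] [? _] [? _]; apply: tle_trans.
- by move=> x y [Nx [xv _]] [Ny [yv _]]; apply: tle_total Nv xv yv.
by exists m; split=> // u Nu uv uw; apply: mmax.
Qed.

Lemma isucc_exists m x : N m -> N x -> le m x -> m <> x ->
  exists2 a, isucc m a & le a x.
Proof.
move=> Nm Nx mx nmx.
case: (@exists_greatest _ (fun a b => le b a)
                         (fun z => [/\ N z, le m z, le z x & z <> m]) x)
  => [||||a [Na ma ax nam] amin].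
- by split=> //; [apply: tle_refl | move=> e; apply: nmx].
- by move=> z [Nz _ _ _]; apply: tle_refl.
- by move=> z y t [? _ _ _] [? _ _ _] [? _ _ _] yz ty; apply: tle_trans ty yz.
- by move=> z y [Nz _ zx _] [Ny _ yx _]; apply: tle_total Nx yx zx.
exists a => //; split=> // [e|z Nz mz za]; first by apply: nam.
have [->|nzm] := classic (z = m); first by left.
by right; apply: tle_anti => //; apply: amin; split=> //; apply: tle_trans za ax.
Qed.

Lemma isucc_unique m a b x : isucc m a -> isucc m b -> N x -> le a x -> le b x -> a = b.
Proof.
move=> [Nm Na ma nma amin] [_ Nb mb nmb bmin] Nx ax bx.
have [ab|ba] := tle_total Na Nb Nx ax bx.
- by case: (bmin a Na ma ab) => // /esym/nma.
- by case: (amin b Nb mb ba) => // /esym/nmb.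
Qed.

Lemma isucc_le m a u y : isucc m a -> N u -> le a u -> N y ->
  le m y -> le y u -> y <> m -> le a y.
Proof.
move=> [Nm Na ma nma amin] Nu au Ny my yu nym.
have [ya|//] := tle_total Ny Na Nu yu au.
by case: (amin y Ny my ya) => // ->; apply: tle_refl.
Qed.

Lemma meetC (v w m : T) : is_meet v w m -> is_meet w v m.
Proof. by move=> [Nm mv mw mmax]; split=> // u Nu uw uv; apply: mmax. Qed.

Lemma meet_unique (v w m m' : T) : is_meet v w m -> is_meet v w m' -> m = m'.
Proof. by move=> [Nm mv mw mmax] [Nm' mv' mw' mmax']; apply: tle_anti; auto. Qed.

Lemma lex_anti v w : N v -> N w -> lex v w -> lex w v -> v = w.
Proof.
move=> Nv Nw [vw|[_ [nwv [m [a [b [[M A B av bw] [nab sab]]]]]]]];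
  case=> [wv|[_ [nvw [m' [b' [a' [[M' B' A' bw' av'] [_ sba]]]]]]]].
- exact: tle_anti.
- by case: nvw.
- by case: nwv.
- have em := meet_unique M (meetC M'); subst m'.
  have ea := isucc_unique A A' Nv av av'; subst a'.
  have eb := isucc_unique B B' Nw bw bw'; subst b'.
  by case: nab; apply: so_anti A B sab sba.
Qed.

Lemma lex_total v w : N v -> N w -> lex v w \/ lex w v.
Proof.
move=> Nv Nw.
have [vw|nvw] := classic (le v w); first by left; left.
have [wv|nwv] := classic (le w v); first by right; left.
have [m M] := meet_exists Nv Nw; case: (M) => Nm mv mw mmax.
have [a A av] : exists2 a, isucc m a & le a v.
  by apply: isucc_exists => // e; apply: nvw; rewrite -e.
have [b B bw] : exists2 b, isucc m b & le b w.
  by apply: isucc_exists => // e; apply: nwv; rewrite -e.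
have nab : a <> b.
  move=> e; subst b; case: (A) => _ Na ma nma _.
  by apply: nma; apply: tle_anti => //; apply: mmax.
have [sab|sba] := so_total A B.
- by left; right; do 2!split=> //; exists m, a, b.
- right; right; do 2!split=> //; exists m, b, a.
  by split; [split=> //; apply: meetC | split=> // /esym].
Qed.

Lemma le_lex_trans u v w : N u -> N v -> N w -> le u v -> lex v w -> lex u w.
Proof.
move=> Nu Nv Nw uv [vw|[_ [nwv [m [a [b [[M A B av bw] nab_sab]]]]]]].
  by left; apply: tle_trans uv vw.
have [uw|nuw] := classic (le u w); first by left.
case: (M) => Nm mv mw mmax.
have [um|mu] := tle_total Nu Nm Nv uv mv.
  by case: nuw; apply: tle_trans um mw.
have num : u <> m by move=> e; subst u.
right; split=> //; split; first by move=> wu; apply: nwv; apply: tle_trans wu uv.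
exists m, a, b; split=> //; split=> //; last exact: isucc_le A Nv av Nu mu uv num.
by split=> // x Nx xu xw; apply: mmax => //; apply: tle_trans xu uv.
Qed.

Variable x : T.
Hypothesis Nx : N x.
Local Notation Sx := (@ot_nodes (subtree x)).

Lemma subtree_le_closed (y z : T) : Sx y -> N z -> le z y -> Sx z.
Proof. by move=> [Ny yx] Nz zy; split=> //; apply: le_lex_trans zy yx. Qed.

Lemma isucc_subtree (a b y : T) : Sx y -> le b y ->
  @isucc (subtree x) a b <-> isucc a b.
Proof.
move=> Sy b_y; have Sb (Nb : N b) : Sx b by apply: subtree_le_closed Sy Nb b_y.
split=> [[[Na _] [Nb _] ab nab bmin] | [Na Nb ab nab bmin]].
- by split=> // z Nz az zb; apply: bmin => //; apply: subtree_le_closed (Sb Nb) Nz zb.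
- split=> //; [exact: subtree_le_closed (Sb Nb) Na ab | exact: Sb |].
  by move=> z [Nz _]; apply: bmin.
Qed.

Lemma meet_subtree (v w m : T) : Sx v -> @is_meet (subtree x) v w m <-> is_meet v w m.
Proof.
move=> Sv; split=> [[[Nm _] mv mw mmax] | [Nm mv mw mmax]].
- by split=> // u Nu uv uw; apply: mmax => //; apply: subtree_le_closed Sv Nu uv.
- by split=> //; [apply: subtree_le_closed Sv Nm mv | move=> u [Nu _]; apply: mmax].
Qed.

Lemma lex_subtree (v w : T) : Sx v -> Sx w -> @lex (subtree x) v w <-> lex v w.
Proof.
move=> Sv Sw.
split=> -[vw|[nvw [nwv [m [a [b [[M A B av bw] [nab sab]]]]]]]]; (try by left);
  right; do 2!split=> //; exists m, a, b; split=> //; split=> //;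
  by [apply/(meet_subtree _ _ Sv) | apply/(isucc_subtree _ Sv av) | apply/(isucc_subtree _ Sw bw)].
Qed.

Lemma root_subtree (r : T) : @is_root (subtree x) r <-> is_root r.
Proof.
have [r0 [Nr0 r0min]] := tree_root.
split=> [[[Nr _] rmin] | [Nr rmin]].
- have rr0 : le r r0 by apply: rmin; split=> //; left; apply: r0min.
  by split=> // w Nw; apply: tle_trans rr0 (r0min w Nw).
- by split=> [|w [Nw _]]; [split=> //; left; apply: rmin | apply: rmin].
Qed.

Lemma subtree_otree : is_otree (subtree x).
Proof.
have isuccW (a b : T) : @isucc (subtree x) a b -> isucc a b.
  by move=> A; case: (A) => _ Sb _ _ _; apply/(isucc_subtree _ Sb (tle_refl (proj1 Sb))).
split.
  have [r R] := tree_root.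
  split; first by exists r; apply/root_subtree.
  - by move=> v [Nv _]; apply: tle_refl.
  - by move=> v w [Nv _] [Nw _]; apply: tle_anti.
  - by move=> u v w [Nu _] [Nv _] [Nw _]; apply: tle_trans.
  - by move=> u u' w [Nu _] [Nu' _] [Nw _]; apply: tle_total.
move=> y [Ny _]; case: oT => _ /(_ y Ny) [srefl santi strans stotal].
by split=> [a /isuccW | a b /isuccW A /isuccW | a b c /isuccW A /isuccW B /isuccW
           | a b /isuccW A /isuccW]; eauto.
Qed.

Lemma subtree_top : Sx x.
Proof. by split=> //; left; apply: tle_refl. Qed.

Lemma subtree_largest_leaf : @is_largest_leaf (subtree x) x.
Proof.
split.
  by split=> [|w [Nw wx] xw]; [apply: subtree_top | apply: lex_anti Nw Nx wx (or_introl xw)].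
by move=> l [Sl _]; apply/(lex_subtree Sl subtree_top); case: Sl.
Qed.

Lemma subtree_largest_leaf_eq (l : T) : @is_largest_leaf (subtree x) l -> l = x.
Proof.
move=> [[[Nl lx] _] lmax].
have /(lex_subtree subtree_top (conj Nl lx)) xl := lmax x (proj1 subtree_largest_leaf).
exact: lex_anti Nl Nx lx xl.
Qed.

End OrderedTree.

Section RestrictedRigidSurjection.
Variables (S T : otree) (f : T -> S) (i : S -> T).
Hypotheses (oS : is_otree S) (oT : is_otree T).
Hypothesis f_nodes : forall w, @ot_nodes T w -> @ot_nodes S (f w).
Hypothesis Hi : is_injection_of f i.

Lemma injection_nodes s : @ot_nodes S s -> @ot_nodes T (i s).
Proof. by case: Hi => -[]; auto. Qed.

Lemma lex_injection s s' : @ot_nodes S s -> @ot_nodes S s' -> lex s s' -> lex (i s) (i s').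
Proof. by case: Hi => -[]; auto. Qed.

Lemma lex_rigid_surjection w s : @ot_nodes T w -> @ot_nodes S s ->
  lex w (i s) -> lex (f w) s.
Proof.
case: (Hi) => _ fi ifw Nw Ns wis; have Nfw := f_nodes Nw.
have [//|sfw] := lex_total oS Nfw Ns.
have ifw_is := le_lex_trans oT (injection_nodes Nfw) Nw (injection_nodes Ns) (ifw w Nw) wis.
have e :=
  lex_anti oT (injection_nodes Nfw) (injection_nodes Ns) ifw_is (lex_injection Ns Nfw sfw).
by rewrite -(fi _ Nfw) e fi //; left; apply: tle_refl.
Qed.

Variable v : S.
Hypothesis Nv : @ot_nodes S v.

Lemma injection_subtree s : @ot_nodes (subtree v) s -> @ot_nodes (subtree (i v)) (i s).
Proof. by move=> [Ns sv]; split; [apply: injection_nodes | apply: lex_injection]. Qed.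

Lemma image_subtree s : @ot_nodes (subtree v) s <->
  exists w, @ot_nodes (subtree (i v)) w /\ f w = s.
Proof.
case: (Hi) => _ fi _; split=> [Ss | [w [[Nw wiv] <-]]].
- by exists (i s); split; [apply: injection_subtree | apply: fi; case: Ss].
- by split; [apply: f_nodes | apply: lex_rigid_surjection].
Qed.

Lemma injection_restrict : @is_injection_of (subtree (i v)) (subtree v) f i.
Proof.
have Niv := injection_nodes Nv.
case: (Hi) => -[_ i_meet _ i_root] fi ifw; split; [split | by move=> s [/fi] | by move=> w [/ifw]].
- exact: injection_subtree.
- move=> s w m Ss Sw /(meet_subtree oS Nv _ _ Ss) M.
  apply/(meet_subtree oT Niv _ _ (injection_subtree Ss)).
  by apply: i_meet => //; [case: Ss | case: Sw].
- move=> s w Ss Sw /(lex_subtree oS Nv Ss Sw) sw.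
  apply/(lex_subtree oT Niv (injection_subtree Ss) (injection_subtree Sw)).
  by apply: lex_injection => //; [case: Ss | case: Sw].
- by move=> r /(root_subtree oS Nv _) /i_root /(root_subtree oT Niv _).
Qed.

Lemma restricted_injection_top e :
  @is_injection_of (subtree (i v)) (subtree v) f e -> e v = i v.
Proof.
have Niv := injection_nodes Nv.
case: (Hi) => _ _ ifw [[e_nodes _ _ _] fe _].
have [Nev evi] := e_nodes v (subtree_top oS Nv).
have iv_ev : @ot_le T (i v) (e v) by rewrite -{1}(fe v (subtree_top oS Nv)); apply: ifw.
by apply: (lex_anti oT Nev Niv evi); left.
Qed.

End RestrictedRigidSurjection.

Theorem lemma4p2 (S T : otree) (f : T -> S) (i : S -> T) (v : S) :
  is_otree S -> is_otree T ->
  rigid_surjection f -> is_injection_of f i -> @ot_nodes S v ->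
  [/\ is_otree (subtree (i v)), is_otree (subtree v),
      (forall s : S, @ot_nodes (subtree v) s <->
         exists w : T, @ot_nodes (subtree (i v)) w /\ f w = s) &
      @sealed (subtree (i v)) (subtree v) f].
Proof.
move=> oS oT [f_nodes _] Hi Nv.
have Niv := injection_nodes Hi Nv.
have image := image_subtree oS oT f_nodes Hi Nv.
split; [exact: subtree_otree | exact: subtree_otree | exact: image |].
split; first split.
- by move=> w Sw; apply/image; exists w.
- by exists i; apply: injection_restrict.
- move=> e He l /(subtree_largest_leaf_eq oS Nv) ->.
  by rewrite (restricted_injection_top oS oT Hi Nv He); apply: subtree_largest_leaf.
Qed.
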